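(* Let $w(z_1,\dots,z_m)$ be a quasi-linear group word, let $n\ge2$ be a natural number, and let $\mathsf F^w_n$ be the free group of rank $n$ of the variety $V_w$, with free basis $x_1,\dots,x_n$ and word norm $\|\cdot\|$ associated with $\overline S$, $S=\{x_1^{\pm1},\dots,x_n^{\pm1}\}$. Let $\mathcal C$ be a class of groups with invariant integer-valued norms which is closed under taking subgroups (with the restricted norm). Then $(\mathsf F^w_n,\|\cdot\|)$ is metrically LE$\mathcal C$ if and only if it is metrically fully residually $\mathcal C$.
   Context: $\Lambda=[0,\infty)$. $V_w$ is the variety of groups satisfying the identity $w=1$. The word $w$ is quasi-linear if for every group $H$ and every generating set $A$ of $H$: $H\in V_w$ iff $w(\bar a)=1$ for every $m$-tuple $\bar a$ of elements of $A$. A pseudo-norm on $G$ is $\ell:G\to\Lambda$ with $\ell(1)=0$, $\ell(g)=\ell(g^{-1})$, $\ell(gh)\le\ell(g)+\ell(h)$; a norm if $\ell(g)=0\Rightarrow g=1$; invariant if $\ell(h^{-1}gh)=\ell(g)$. For symmetric $S\subseteq G$, $\overline S$ is the smallest conjugation-invariant subset containing $S$; the word norm is $\|g\|=\min\{k:g=s_1\cdots s_k,s_i\in\overline S\}$. For pseudo-normed $(G_1,\ell_1),(G_2,\ell_2)$, finite $D\subseteq G_1$ and finite $Q\subseteq\Lambda\cap\mathbb Q$ with $0\in Q$, $\varphi:G_1\to G_2$ is a $D$-$Q$-almost-homomorphism if injective on $D$, $\varphi(hg)=\varphi(h)\varphi(g)$ whenever $h,g,hg\in D$, and $\ell_1(g)\,\square\,q\iff\ell_2(\varphi(g))\,\square\,q$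 for all $g\in D,q\in Q,\square\in\{<,>,=\}$. $(G,\ell)$ is metrically LE$\mathcal C$ if for all such $D,Q$ there are $(C,\ell_C)\in\mathcal C$ and a $D$-$Q$-almost-homomorphism $G\to C$; it is metrically fully residually $\mathcal C$ if for all such $D,Q$ there are $(C,\ell_C)\in\mathcal C$ and a group homomorphism $\varphi:G\to C$ with $\ell_C(\varphi(g))\le\ell(g)$ for all $g\in G$ which is a $D$-$Q$-almost-homomorphism. *)

From HB Require Import structures.
From mathcomp Require Import all_boot monoid all_order all_algebra.
Set Implicit Arguments. Unset Strict Implicit. Unset Printing Implicit Defensive.
Import Order.TTheory GRing.Theory Num.Theory.

Local Open Scope group_scope.

Inductive gword (m : nat) : Type :=
  | GVar of 'I_m
  | GOne
  | GMul of gword m & gword m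
  | GInv of gword m.

Fixpoint geval (m : nat) (H : groupType) (a : 'I_m -> H) (t : gword m) : H :=
  match t with
  | GVar i => a i
  | GOne => 1
  | GMul t1 t2 => geval a t1 * geval a t2
  | GInv t1 => (geval a t1)^-1
  end.

Definition in_variety (m : nat) (w : gword m) (H : groupType) : Prop :=
  forall a : 'I_m -> H, geval a w = 1.

Definition generates (H : groupType) (A : H -> Prop) : Prop :=
  forall h : H, exists (k : nat) (t : gword k) (a : 'I_k -> H),
    (forall i, A (a i)) /\ h = geval a t.

Definition quasi_linear (m : nat) (w : gword m) : Prop :=
  forall (H : groupType) (A : H -> Prop), generates A ->
    (in_variety w H <->
     forall a : 'I_m -> H, (forall i, A (a i)) -> geval a w = 1).

Definition is_hom (G H : groupType) (f : G -> H) : Prop :=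
  forall g h : G, f (g * h) = f g * f h.

Definition is_free_Vw (m : nat) (w : gword m) (n : nat) (F : groupType)
    (x : 'I_n -> F) : Prop :=
  [/\ in_variety w F,
      generates (fun g => exists i, g = x i) &
      forall (H : groupType) (h : 'I_n -> H), in_variety w H ->
        exists f : F -> H, is_hom f /\ forall i, f (x i) = h i].

Definition in_S (n : nat) (F : groupType) (x : 'I_n -> F) (g : F) : Prop :=
  exists i, g = x i \/ g = (x i)^-1.

Definition in_Sbar (n : nat) (F : groupType) (x : 'I_n -> F) (g : F) : Prop :=
  forall T : F -> Prop,
    (forall s, in_S x s -> T s) ->
    (forall t y : F, T t -> T (conjg t y)) -> T g.

Definition gprod (G : groupType) (s : seq G) : G := foldr (fun a b => a * b) 1 s.

Definition is_word_norm (n : nat) (F : groupType) (x : 'I_n -> F)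
    (nrm : F -> nat) : Prop :=
  forall g : F,
    (exists s : seq F, size s = nrm g /\ (forall y, y \in s -> in_Sbar x y)
                       /\ g = gprod s) /\
    (forall s : seq F, (forall y, y \in s -> in_Sbar x y) -> g = gprod s ->
       (nrm g <= size s)%N).

Definition invariant_norm (G : groupType) (l : G -> nat) : Prop :=
  [/\ l 1 = 0%N,
      forall g : G, l g^-1 = l g,
      forall g h : G, (l (g * h)%g <= l g + l h)%N,
      forall g : G, l g = 0%N -> g = 1 &
      forall g h : G, l (conjg g h) = l g].

Local Open Scope ring_scope.

(* D-Q-almost-homomorphism, for integer-valued norms; Q is a finite set of
   nonnegative rationals containing 0 (given as a sequence). *)
Definition almost_hom (G1 G2 : groupType) (l1 : G1 -> nat) (l2 : G2 -> nat)
    (D : seq G1) (Q : seq rat) (phi : G1 -> G2) : Prop :=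
  [/\ {in D &, injective phi},
      (forall g h : G1, g \in D -> h \in D -> (h * g)%g \in D ->
          phi (h * g)%g = (phi h * phi g)%g) &
      forall (g : G1) (q : rat), g \in D -> q \in Q ->
        [/\ ((l1 g)%:R < q) <-> ((l2 (phi g))%:R < q),
            ((l1 g)%:R > q) <-> ((l2 (phi g))%:R > q) &
            ((l1 g)%:R = q :> rat) <-> ((l2 (phi g))%:R = q :> rat)]].

Definition admissible_Q (Q : seq rat) : Prop :=
  0 \in Q /\ forall q, q \in Q -> 0 <= q.

Definition metrically_LE (C : forall G : groupType, (G -> nat) -> Prop)
    (G : groupType) (l : G -> nat) : Prop :=
  forall (D : seq G) (Q : seq rat), admissible_Q Q ->
    exists (K : groupType) (lK : K -> nat),
      C K lK /\ exists phi : G -> K, almost_hom l lK D Q phi.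

Definition metrically_fully_residually (C : forall G : groupType, (G -> nat) -> Prop)
    (G : groupType) (l : G -> nat) : Prop :=
  forall (D : seq G) (Q : seq rat), admissible_Q Q ->
    exists (K : groupType) (lK : K -> nat),
      C K lK /\ exists phi : G -> K,
        [/\ is_hom phi, (forall g, (lK (phi g) <= l g)%N) & almost_hom l lK D Q phi].

From HB Require Import structures.
From mathcomp Require Import all_boot monoid all_order all_algebra.
From Stdlib Require Import ClassicalEpsilon.
Set Implicit Arguments. Unset Strict Implicit. Unset Printing Implicit Defensive.
Import Num.Theory.

(* An almost-homomorphism phi : F -> K with (K, l) in C, defined on a large
   enough finite set D', sends every instance w(x_j1, ..., x_jm) of the law to 1,
   because D' contains the values of all its subterms.  As w is quasi-linear,
   the subgroup H of K generated by the phi(x_i) then lies in V_w, and freeness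
   of F extends x_i |-> phi(x_i) to a homomorphism psi : F -> H agreeing with
   phi on D.  Adding 1 to the test values Q forces l(phi(x_i)) <= 1; by
   conjugation invariance every element of S-bar has psi-image of norm at most 1,
   and subadditivity gives l(psi g) <= ||g||. *)

Local Open Scope group_scope.

Fixpoint gword_rename k n (f : 'I_k -> 'I_n) (t : gword k) : gword n :=
  match t with
  | GVar i => GVar (f i)
  | GOne => GOne n
  | GMul t1 t2 => GMul (gword_rename f t1) (gword_rename f t2)
  | GInv t1 => GInv (gword_rename f t1)
  end.

Lemma geval_rename (G : groupType) k n (f : 'I_k -> 'I_n) (b : 'I_n -> G) t :
  geval b (gword_rename f t) = geval (b \o f) t.
Proof. by elim: t => //= [t1 -> t2 ->|t1 ->]. Qed.

Lemma eq_geval (G : groupType) k (a b : 'I_k -> G) t :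
  a =1 b -> geval a t = geval b t.
Proof. by move=> ab; elim: t => //= [t1 -> t2 ->|t1 ->]. Qed.

Fixpoint subterm_values (G : groupType) k (a : 'I_k -> G) (t : gword k) : seq G :=
  match t with
  | GVar i => [:: a i]
  | GOne => [:: 1]
  | GMul t1 t2 =>
      geval a t1 * geval a t2 :: subterm_values a t1 ++ subterm_values a t2
  | GInv t1 => (geval a t1)^-1 :: subterm_values a t1
  end.

Lemma geval_in_subterm_values (G : groupType) k (a : 'I_k -> G) t :
  geval a t \in subterm_values a t.
Proof. by case: t => /= *; rewrite mem_head. Qed.

Section PartialMorphism.
Variables (G K : groupType) (phi : G -> K) (L : seq G).
Hypotheses (L1 : 1 \in L)
  (phiM : forall g h, g \in L -> h \in L -> h * g \in L -> phi (h * g) = phi h * phi g).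

Lemma partial_morph1 : phi 1 = 1.
Proof. by apply: (mulIg (phi 1)); rewrite mul1g -phiM ?mulg1. Qed.

Lemma geval_partial_morph k (a : 'I_k -> G) t :
  {subset subterm_values a t <= L} -> phi (geval a t) = geval (phi \o a) t.
Proof.
have phi1 := partial_morph1.
elim: t => //= [t1 IH1 t2 IH2|t1 IH1] subL.
- have L_t1 : {subset subterm_values a t1 <= L}.
    by move=> y yt; apply: subL; rewrite inE mem_cat yt orbT.
  have L_t2 : {subset subterm_values a t2 <= L}.
    by move=> y yt; apply: subL; rewrite inE mem_cat yt !orbT.
  rewrite phiM ?IH1 ?IH2 ?(L_t1 _ (geval_in_subterm_values _ _))
    ?(L_t2 _ (geval_in_subterm_values _ _)) //.
  by apply: subL; rewrite mem_head.
- have L_t1 : {subset subterm_values a t1 <= L}.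
    by move=> y yt; apply: subL; rewrite inE yt orbT.
  have L_V : (geval a t1)^-1 \in L by apply: subL; rewrite mem_head.
  rewrite -IH1 //; apply/esym/mulg1_eq.
  by rewrite -phiM ?mulgV ?(L_t1 _ (geval_in_subterm_values _ _)) // mulgV.
Qed.

End PartialMorphism.

Section Hom.
Variables (G K : groupType) (f : G -> K).
Hypothesis fM : is_hom f.

Lemma hom1 : f 1 = 1.
Proof. by apply: (mulIg (f 1)); rewrite mul1g -fM mulg1. Qed.

Lemma homV g : f g^-1 = (f g)^-1.
Proof. by apply/esym/mulg1_eq; rewrite -fM mulgV hom1. Qed.

Lemma homJ g h : f (g ^ h) = f g ^ f h.
Proof. by rewrite !conjgE !fM homV. Qed.

Lemma hom_geval k (a : 'I_k -> G) t : f (geval a t) = geval (f \o a) t.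
Proof.
by elim: t => //= [|t1 IH1 t2 IH2|t1 IH1]; rewrite ?hom1 ?fM ?homV ?IH1 ?IH2.
Qed.

Lemma hom_gprod s : f (gprod s) = gprod (map f s).
Proof. by elim: s => [|g s IH]; rewrite /gprod /= ?hom1 // fM IH. Qed.

End Hom.

Section WordNormBound.
Variables (n : nat) (F K : groupType) (x : 'I_n -> F) (nrm : F -> nat).
Variables (l : K -> nat) (f : F -> K).
Hypotheses (nrmP : is_word_norm x nrm) (l_inv : invariant_norm l) (fM : is_hom f).

Lemma word_norm_basis_le1 i : nrm (x i) <= 1.
Proof.
apply: (proj2 (nrmP (x i)) [:: x i]); last by rewrite /gprod /= mulg1.
by move=> y; rewrite inE => /eqP -> T TS _; apply: TS; exists i; left.
Qed.

Lemma norm_gprod_le (s : seq K) :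
  (forall y, y \in s -> l y <= 1) -> l (gprod s) <= size s.
Proof.
have [l1 _ lM _ _] := l_inv.
elim: s => [|y s IH] s_le1; first by rewrite /gprod /= l1.
apply: leq_trans (lM _ _) _; rewrite /= -add1n leq_add ?s_le1 ?mem_head //.
by apply: IH => z zs; apply: s_le1; rewrite inE zs orbT.
Qed.

Hypothesis f_basis_le1 : forall i, l (f (x i)) <= 1.

Lemma norm_hom_Sbar_le1 y : in_Sbar x y -> l (f y) <= 1.
Proof.
have [_ lV _ _ lJ] := l_inv.
move/(_ (fun y => l (f y) <= 1)); apply=> [_ [i [->|->]]|t z] //.
  by rewrite (homV fM) lV.
by rewrite (homJ fM) lJ.
Qed.

Lemma norm_hom_le_word_norm g : l (f g) <= nrm g.
Proof.
have [[s [<- [sS ->]]] _] := nrmP g.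
rewrite (hom_gprod fM) -(size_map f) norm_gprod_le // => _ /mapP [y ys ->].
by apply: norm_hom_Sbar_le1; apply: sS.
Qed.

End WordNormBound.

Lemma basis_word n (F : groupType) (x : 'I_n -> F) :
  generates (fun g => exists i, g = x i) -> forall g, exists t : gword n, g = geval x t.
Proof.
move=> gen g; have [k [t [a [a_x ->]]]] := gen g.
have [j a_xj] := fin_all_exists a_x.
by exists (gword_rename j t); rewrite geval_rename; apply: eq_geval.
Qed.

Lemma basis_words_subterms n (F : groupType) (x : 'I_n -> F) :
    generates (fun g => exists i, g = x i) ->
  forall D : seq F, exists L : seq F, forall g, g \in D ->
    exists t, g = geval x t /\ {subset subterm_values x t <= L}.
Proof.
move=> gen; elim=> [|g D [L DL]]; first by exists [::].
have [t ->] := basis_word gen g.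
exists (subterm_values x t ++ L) => h; rewrite inE => /predU1P [->|hD].
  by exists t; split=> // y yt; rewrite mem_cat yt.
have [t' [-> sub]] := DL h hD; exists t'; split=> // y /sub yL.
by rewrite mem_cat yL orbT.
Qed.

Section GeneratedSubgroup.
Variables (K : groupType) (n : nat) (y : 'I_n -> K).

Definition word_value (k : K) : Prop := exists t : gword n, k = geval y t.

Definition word_valueb : pred K :=
  fun k => if excluded_middle_informative (word_value k) then true else false.

Lemma word_valueP k : reflect (word_value k) (word_valueb k).
Proof. by rewrite /word_valueb; case: excluded_middle_informative; constructor. Qed.

Lemma word_value_group_closed : group_closed word_valueb.
Proof.
split; first by apply/word_valueP; exists (GOne n).
move=> a b /word_valueP [ta ->] /word_valueP [tb ->]; apply/word_valueP.
by exists (GMul ta (GInv tb)).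
Qed.

Record gen_subgroup := GenSubgroup { gen_val : K; gen_valP : word_valueb gen_val }.
HB.instance Definition _ := [isSub for gen_val].
HB.instance Definition _ := [Choice of gen_subgroup by <:].
HB.instance Definition _ :=
  SubChoice_isSubGroup.Build K word_valueb gen_subgroup word_value_group_closed.

Definition gen_generator i : gen_subgroup :=
  GenSubgroup (introT (word_valueP _) (ex_intro _ (GVar i) erefl)).

Lemma val_geval k (b : 'I_k -> gen_subgroup) t :
  val (geval b t) = geval (val \o b) t.
Proof. by elim: t => //= [t1 <- t2 <-|t1 <-]. Qed.

Lemma generates_generators : generates (fun h => exists i, h = gen_generator i).
Proof.
move=> h; have /word_valueP [t ht] := valP h.
exists n, t, gen_generator; split=> [i|]; first by exists i.
by apply: val_inj; rewrite ht val_geval.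
Qed.

Lemma in_variety_gen_subgroup m (w : gword m) : quasi_linear w ->
  (forall j : {ffun 'I_m -> 'I_n}, geval (y \o j) w = 1) -> in_variety w gen_subgroup.
Proof.
move=> qlin w_y; apply/(qlin _ _ generates_generators) => b b_gen.
have [j b_j] := fin_all_exists b_gen.
apply: val_inj; rewrite val_geval val1 -(w_y [ffun i => j i]).
by apply: eq_geval => i; rewrite /= b_j ffunE.
Qed.

End GeneratedSubgroup.

Lemma almost_hom_leq_nat (G1 G2 : groupType) (l1 : G1 -> nat) (l2 : G2 -> nat)
    D Q (phi : G1 -> G2) g k :
  almost_hom l1 l2 D Q phi -> g \in D -> (k%:R)%R \in Q ->
  (l2 (phi g) <= k)%N = (l1 g <= k)%N.
Proof.
move=> [_ _ phiQ] gD kQ; have [_ gt _] := phiQ g _ gD kQ.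
rewrite !ltr_nat in gt; case: gt => lt12 lt21.
by apply/idP/idP; apply: contraTT; rewrite -!ltnNge.
Qed.

Lemma almost_hom_val (G K : groupType) (S : pred K) (H : subGroupType S)
    (l : G -> nat) (lK : K -> nat) D' Q' (phi : G -> K) D Q (psi : G -> H) :
  almost_hom l lK D' Q' phi -> {subset D <= D'} -> {subset Q <= Q'} ->
  {in D, forall g, val (psi g) = phi g} ->
  almost_hom l (fun h : H => lK (val h)) D Q psi.
Proof.
move=> [phi_inj phiM phiQ] DD' QQ' psi_phi; split.
- move=> g h gD hD /(congr1 val); rewrite !psi_phi // => /phi_inj.
  by apply; apply: DD'.
- move=> g h gD hD hgD; apply: val_inj.
  by rewrite valM !psi_phi //; apply: phiM; apply: DD'.
- by move=> g q gD qQ; rewrite psi_phi //; apply: phiQ; [apply: DD' | apply: QQ'].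
Qed.

Lemma metrically_fully_residually_LE C (G : groupType) (l : G -> nat) :
  metrically_fully_residually C l -> metrically_LE C l.
Proof.
move=> FR D Q adQ; have [K [lK [CK [phi [_ _ phiD]]]]] := FR D Q adQ.
by exists K, lK; split=> //; exists phi.
Qed.

Section FreeExtension.
Variables (m : nat) (w : gword m) (n : nat) (F : groupType) (x : 'I_n -> F).
Hypotheses (qlin : quasi_linear w) (x_free : is_free_Vw w x).

Definition basis_law_subterms : seq F :=
  flatten [seq subterm_values (fun i => x (f i)) w | f : {ffun 'I_m -> 'I_n}].

Variables (K : groupType) (phi : F -> K) (L : seq F).
Hypotheses (L1 : 1 \in L)
  (phiM : forall g h, g \in L -> h \in L -> h * g \in L -> phi (h * g) = phi h * phi g)
  (basis_law_subterms_L : {subset basis_law_subterms <= L}).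

Lemma in_variety_image_subgroup : in_variety w (gen_subgroup (phi \o x)).
Proof.
have [w_F _ _] := x_free.
apply: in_variety_gen_subgroup => // j.
rewrite -(geval_partial_morph L1 phiM) ?w_F ?(partial_morph1 L1 phiM) //.
by move=> g gw; apply/basis_law_subterms_L/flatten_mapP; exists j; rewrite ?mem_enum.
Qed.

Lemma free_extension : exists psi : F -> gen_subgroup (phi \o x),
  is_hom psi /\ forall t, {subset subterm_values x t <= L} ->
                  val (psi (geval x t)) = phi (geval x t).
Proof.
have [_ _ univ] := x_free.
have [psi [psiM psi_x]] := univ _ (gen_generator (phi \o x)) in_variety_image_subgroup.
exists psi; split=> // t tL.
rewrite (hom_geval psiM) val_geval (geval_partial_morph L1 phiM tL).
by apply: eq_geval => i /=; rewrite psi_x.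
Qed.

End FreeExtension.

Lemma metrically_LE_fully_residually m (w : gword m) n (F : groupType)
    (x : 'I_n -> F) (nrm : F -> nat) (C : forall G : groupType, (G -> nat) -> Prop) :
  quasi_linear w -> is_free_Vw w x -> is_word_norm x nrm ->
  (forall (G : groupType) (l : G -> nat), C G l -> invariant_norm l) ->
  (forall (G : groupType) (l : G -> nat) (S : pred G) (H : subGroupType S),
      C G l -> C H (fun h : H => l (val h))) ->
  metrically_LE C nrm -> metrically_fully_residually C nrm.
Proof.
move=> qlin x_free nrmP C_norm C_sub LE D Q [Q0 Q_ge0].
have [_ x_gen _] := x_free.
have [LD LD_words] := basis_words_subterms x_gen D.
pose D' := D ++ LD ++ basis_law_subterms w x ++ 1 :: [seq x i | i <- enum 'I_n].
pose Q' := 1%R :: Q.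
have Q'_adm : admissible_Q Q'.
  by split=> [|q /predU1P [->|/Q_ge0]]; rewrite ?inE ?Q0 ?orbT.
have [K [lK [CK [phi phi_ah]]]] := LE D' Q' Q'_adm.
have [_ phiM _] := phi_ah.
have D'1 : 1 \in D' by rewrite !mem_cat mem_head !orbT.
have law_D' : {subset basis_law_subterms w x <= D'}.
  by move=> g gw; rewrite !mem_cat gw !orbT.
have [psi [psiM psi_phi]] := free_extension qlin x_free D'1 phiM law_D'.
have basis_D' i : x i \in D'.
  by rewrite /D' !mem_cat inE map_f ?mem_enum ?orbT.
have psi_basis i : val (psi (x i)) = phi (x i).
  by apply: (psi_phi (GVar i)) => _ /predU1P [-> | //].
have CH := C_sub _ _ _ (gen_subgroup (phi \o x)) CK.
exists _, (fun h : gen_subgroup (phi \o x) => lK (val h)).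
split; [exact: CH | exists psi; split=> //].
- apply: (norm_hom_le_word_norm nrmP (C_norm _ _ CH) psiM) => i.
  rewrite psi_basis (almost_hom_leq_nat (k := 1) phi_ah) ?mem_head //.
  exact: word_norm_basis_le1 nrmP i.
- apply: almost_hom_val phi_ah _ _ _ => [g gD | q qQ | g gD].
  + by rewrite mem_cat gD.
  + by rewrite inE qQ orbT.
  + have [t [-> tLD]] := LD_words g gD.
    by apply: psi_phi => y /tLD yLD; rewrite !mem_cat yLD orbT.
Qed.

Theorem proposition3p3 (m : nat) (w : gword m) (n : nat) (F : groupType)
    (x : 'I_n -> F) (nrm : F -> nat)
    (C : forall G : groupType, (G -> nat) -> Prop) :
  quasi_linear w ->
  (2 <= n)%N ->
  is_free_Vw w x ->
  is_word_norm x nrm ->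
  (forall (G : groupType) (l : G -> nat), C G l -> invariant_norm l) ->
  (forall (G : groupType) (l : G -> nat) (S : pred G) (H : subGroupType S),
      C G l -> C H (fun h : H => l (val h))) ->
  (metrically_LE C nrm <-> metrically_fully_residually C nrm).
Proof.
move=> qlin _ x_free nrmP C_norm C_sub; split.
  exact: (metrically_LE_fully_residually qlin x_free nrmP C_norm C_sub).
exact: metrically_fully_residually_LE.
Qed.
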